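(* Let $K$ be a unital commutative ring and let $A$ be a unital $K$-algebra. Then the following are equivalent: (1) $A=A[A,A]A$, i.e. $A$ agrees with its commutator ideal; (2) $A$ is generated by its commutators as a $K$-algebra; (3) there exists $N\in\mathbb{N}$ such that for every $a\in A$ there exist $b_j,c_j,d_j,e_j\in A$, $j=1,\dots,N$, with \[ a=\sum_{j=1}^N [b_j,c_j][d_j,e_j]. \]
   Context: $K$-algebras are associative. For $x,y\in A$, $[x,y]=xy-yx$. $[A,A]$ is the additive subgroup (equivalently $K$-submodule) generated by all commutators, and $A[A,A]A$ is the additive subgroup generated by all elements $azb$ with $a,b\in A$, $z\in[A,A]$. *)

From mathcomp Require Import all_boot all_order all_algebra.
Set Implicit Arguments. Unset Strict Implicit. Unset Printing Implicit Defensive.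
Import GRing.Theory.
Local Open Scope ring_scope.

Definition commr_op (R : pzRingType) (x y : R) : R := x * y - y * x.

Inductive add_subgroup_gen (V : zmodType) (S : V -> Prop) : V -> Prop :=
  | asg_gen x : S x -> add_subgroup_gen S x
  | asg_0 : add_subgroup_gen S 0
  | asg_sub x y : add_subgroup_gen S x -> add_subgroup_gen S y ->
                  add_subgroup_gen S (x - y).

Definition comm_span (R : pzRingType) (t : R) : Prop :=
  add_subgroup_gen (fun z => exists x y : R, z = commr_op x y) t.

Definition comm_sandwich (R : pzRingType) (t : R) : Prop :=
  exists a z b : R, comm_span z /\ t = a * z * b.

Definition comm_ideal (R : pzRingType) (t : R) : Prop :=
  add_subgroup_gen (@comm_sandwich R) t.

(* The (not necessarily unital) K-subalgebra generated by a predicate S: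
   smallest subset containing S, 0, closed under +, K-scaling and product. *)
Inductive subalg_gen (K : pzRingType) (A : lalgType K) (S : A -> Prop) : A -> Prop :=
  | sag_gen x : S x -> subalg_gen S x
  | sag_0 : subalg_gen S 0
  | sag_add x y : subalg_gen S x -> subalg_gen S y -> subalg_gen S (x + y)
  | sag_scale (k : K) x : subalg_gen S x -> subalg_gen S (k *: x)
  | sag_mul x y : subalg_gen S x -> subalg_gen S y -> subalg_gen S (x * y).

From mathcomp Require Import all_boot all_order all_algebra.
From Stdlib Require Ncring Ncring_tac.
Set Implicit Arguments. Unset Strict Implicit. Unset Printing Implicit Defensive.
Import GRing.Theory.
Local Open Scope ring_scope.

(* Only (1) => (3) has content.  Let D be the ideal generated by the [[a,b],x]
   and J the ideal generated by the [[a,b],[c,d]].  Modulo D every commutator is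
   central and squares to zero, so an element 1 - sum_i c_i w_i with commutators
   c_i can be inverted one term at a time: if the commutators generate the unit
   ideal, so does D.  An explicit identity puts D * D inside J, so J = A.
   Finally x [[a,b],[c,d]] is a sum of nine products of two commutators, and
   t (x g y) = (y t x) g + [t x g, y] where [-, y] at most doubles the number of
   such products; writing 1 as a finite combination of generators of J bounds
   the number of products uniformly in t. *)

#[local] Instance pzRing_ops (R : pzRingType) :
  @Ncring.Ring_ops R 0 1 +%R *%R (fun x y => x - y) -%R eq := {}.

#[local] Program Instance pzRing_Ring (R : pzRingType) : Ncring.Ring (Ro := pzRing_ops R).
Next Obligation. exact: add0r. Qed.
Next Obligation. exact: addrC. Qed.
Next Obligation. exact: addrA. Qed.
Next Obligation. exact: mul1r. Qed.
Next Obligation. exact: mulr1. Qed.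
Next Obligation. exact: mulrA. Qed.
Next Obligation. exact: mulrDl. Qed.
Next Obligation. exact: mulrDr. Qed.
Next Obligation. by []. Qed.
Next Obligation. exact: subrr. Qed.

Ltac comm_ring := unfold commr_op; Ncring_tac.non_commutative_ring.

Section CommutatorIdentities.
Variable R : pzRingType.
Implicit Types a b c d x y z t : R.

Lemma commr_opC x y : commr_op x y = - commr_op y x.
Proof. comm_ring. Qed.

Lemma commr_opMl x y z : commr_op (x * y) z = commr_op x z * y + x * commr_op y z.
Proof. comm_ring. Qed.

Lemma commr_op_suml (I : Type) (r : seq I) (P : pred I) (F : I -> R) y :
  commr_op (\sum_(i <- r | P i) F i) y = \sum_(i <- r | P i) commr_op (F i) y.
Proof. by rewrite /commr_op mulr_suml mulr_sumr -sumrB. Qed.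

Lemma commr_op_sqr a b :
  commr_op a b * commr_op a b = commr_op (commr_op a (a * b)) b - a * commr_op (commr_op a b) b.
Proof. comm_ring. Qed.

Lemma commr_x_mul_commr_x c x y c' x' :
  commr_op c x * y * commr_op c' x' =
    y * commr_op c (commr_op c' (x' * x)) + y * commr_op c (commr_op x (x' * c'))
  - y * commr_op c (commr_op x x') * c' - y * commr_op x x' * commr_op c c'
  - y * commr_op c (commr_op c' x') * x - commr_op (commr_op c x) (commr_op x' (y * c'))
  + commr_op (commr_op c x) (commr_op x' y) * c' + commr_op x' y * commr_op (commr_op c x) c'.
Proof. comm_ring. Qed.

Lemma mul_commr_comm x a b c d :
  x * commr_op (commr_op a b) (commr_op c d) =
  commr_op (x * d) c * commr_op a b + commr_op c x * commr_op a (d * b)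
  + commr_op (a * c) x * commr_op b d + commr_op (c * x) a * commr_op b d
  + commr_op x c * commr_op (a * b) d + commr_op a (x * c) * commr_op b d
  + commr_op a x * commr_op (b * d) c + commr_op x a * commr_op b (c * d)
  + commr_op a (x * b) * commr_op c d.
Proof. comm_ring. Qed.

Lemma mul_sandwich_commr t x g y : t * (x * g * y) = y * t * x * g + commr_op (t * x * g) y.
Proof. comm_ring. Qed.

End CommutatorIdentities.

Section AddSubgroupGen.
Variables (V : zmodType) (S : V -> Prop).

Lemma add_subgroup_genN x : add_subgroup_gen S x -> add_subgroup_gen S (- x).
Proof. by move=> Sx; rewrite -sub0r; apply: asg_sub Sx; apply: asg_0. Qed.

Lemma add_subgroup_genD x y :
  add_subgroup_gen S x -> add_subgroup_gen S y -> add_subgroup_gen S (x + y).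
Proof. by move=> Sx /add_subgroup_genN Sy; rewrite -[y]opprK; apply: asg_sub. Qed.

End AddSubgroupGen.

Section IdealGen.
Variables (R : pzRingType) (G : R -> Prop).

Definition ideal_gen : R -> Prop :=
  add_subgroup_gen (fun t => exists x g y, G g /\ t = x * g * y).

Lemma ideal_gen0 : ideal_gen 0.
Proof. exact: asg_0. Qed.

Lemma ideal_genB x y : ideal_gen x -> ideal_gen y -> ideal_gen (x - y).
Proof. exact: asg_sub. Qed.

Lemma ideal_genN x : ideal_gen x -> ideal_gen (- x).
Proof. exact: add_subgroup_genN. Qed.

Lemma ideal_genD x y : ideal_gen x -> ideal_gen y -> ideal_gen (x + y).
Proof. exact: add_subgroup_genD. Qed.

Lemma ideal_gen_sandwich x g y : G g -> ideal_gen (x * g * y).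
Proof. by move=> Gg; apply: asg_gen; exists x, g, y. Qed.

Lemma ideal_gen_gen g : G g -> ideal_gen g.
Proof. by move=> /(ideal_gen_sandwich 1 1); rewrite mul1r mulr1. Qed.

Lemma ideal_genMl a x : ideal_gen x -> ideal_gen (a * x).
Proof.
elim=> [_ [y [g [z [Gg ->]]]] | | u v _ IHu _ IHv].
- by rewrite !mulrA; apply: ideal_gen_sandwich.
- by rewrite mulr0; apply: ideal_gen0.
- by rewrite mulrBr; apply: ideal_genB.
Qed.

Lemma ideal_genMr a x : ideal_gen x -> ideal_gen (x * a).
Proof.
elim=> [_ [y [g [z [Gg ->]]]] | | u v _ IHu _ IHv].
- by rewrite -mulrA; apply: ideal_gen_sandwich.
- by rewrite mul0r; apply: ideal_gen0.
- by rewrite mulrBl; apply: ideal_genB.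
Qed.

End IdealGen.

Lemma ideal_gen_span (R : pzRingType) (G : R -> Prop) t :
  ideal_gen (add_subgroup_gen G) t -> ideal_gen G t.
Proof.
elim=> [_ [x [g [y [Gg ->]]]] | | u v _ IHu _ IHv].
- elim: Gg => [h Gh | | h1 h2 _ IH1 _ IH2].
  + exact: ideal_gen_sandwich.
  + by rewrite mulr0 mul0r; apply: ideal_gen0.
  + by rewrite mulrBr mulrBl; apply: ideal_genB.
- exact: ideal_gen0.
- exact: ideal_genB.
Qed.

Lemma ideal_gen_mul (R : pzRingType) (G H : R -> Prop) u v :
  (forall g y h, G g -> G h -> ideal_gen H (g * y * h)) ->
  ideal_gen G u -> ideal_gen G v -> ideal_gen H (u * v).
Proof.
move=> GyG Gu Gv; elim: Gu => [_ [x [g [y [Gg ->]]]] | | u1 u2 _ IH1 _ IH2].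
- elim: Gv => [_ [x' [g' [y' [Gg' ->]]]] | | v1 v2 _ IH1 _ IH2].
  + have -> : x * g * y * (x' * g' * y') = x * (g * (y * x') * g') * y' by rewrite !mulrA.
    by apply/ideal_genMr/ideal_genMl; apply: GyG.
  + by rewrite mulr0; apply: ideal_gen0.
  + by rewrite mulrBr; apply: ideal_genB.
- by rewrite mul0r; apply: ideal_gen0.
- by rewrite mulrBl; apply: ideal_genB.
Qed.

Lemma ideal_genZ (K : pzRingType) (A : lalgType K) (G : A -> Prop) (k : K) x :
  ideal_gen G x -> ideal_gen G (k *: x).
Proof. by rewrite -mulr_algl; apply: ideal_genMl. Qed.

Section CentralSquareZero.
Variables (R : pzRingType) (C D : R -> Prop).
Hypothesis C_central : forall c x, C c -> ideal_gen D (c * x - x * c).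
Hypothesis C_sqr0 : forall c, C c -> ideal_gen D (c * c).

Lemma ideal_gen_sandwich_central c z : C c -> ideal_gen D (c * z * c).
Proof.
move=> Cc; have -> : c * z * c = c * c * z - c * (c * z - z * c) by comm_ring.
by apply: ideal_genB; [apply/ideal_genMr/C_sqr0 | apply/ideal_genMl/C_central].
Qed.

Lemma ideal_gen_sum_normal_form t : ideal_gen C t ->
  exists s : seq (R * R), {in s, forall p, C p.1} /\
    ideal_gen D (t - \sum_(p <- s) p.1 * p.2).
Proof.
elim=> [_ [x [c [y [Cc ->]]]] | | u v _ [su [Csu Du]] _ [sv [Csv Dv]]].
- exists [:: (c, x * y)]; split=> [p /[!inE] /eqP -> // | ].
  rewrite big_seq1 /=.
  have -> : x * c * y - c * (x * y) = - ((c * x - x * c) * y) by comm_ring.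
  by apply/ideal_genN/ideal_genMr/C_central.
- by exists [::]; split=> //; rewrite big_nil subr0; apply: ideal_gen0.
- exists (su ++ [seq (p.1, - p.2) | p <- sv]); split.
  + by move=> p; rewrite mem_cat => /orP[/Csu // | /mapP[q /Csv Cq ->]].
  + rewrite big_cat big_map /=.
    have -> : \sum_(p <- sv) p.1 * - p.2 = - \sum_(p <- sv) p.1 * p.2.
      by rewrite -sumrN; apply: eq_bigr => p _; rewrite mulrN.
    have -> : forall Su Sv, u - v - (Su + - Sv) = (u - Su) - (v - Sv) by move=> *; comm_ring.
    exact: ideal_genB.
Qed.

Lemma ideal_gen1_of_sum_normal_form s r : {in s, forall p, C p.1} ->
  ideal_gen D (1 - (\sum_(p <- s) p.1 * p.2) * r) -> ideal_gen D 1.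
Proof.
elim: s r => [|[c w] s IHs] r Cs; first by rewrite big_nil mul0r subr0.
rewrite big_cons /= => D1.
have Cc : C c by apply: (Cs (c, w)); rewrite mem_head.
set e := c * w * r.
have De2 : ideal_gen D (e * e).
  by rewrite /e !mulrA -(mulrA c w r); apply/ideal_genMr/ideal_genMr/ideal_gen_sandwich_central.
apply: (IHs (r * (1 + e))) => [p sp | ]; first by apply: Cs; rewrite inE sp orbT.
(* 1 + e inverts 1 - e modulo D *)
have -> : 1 - (\sum_(p <- s) p.1 * p.2) * (r * (1 + e)) =
          (1 - (c * w + \sum_(p <- s) p.1 * p.2) * r) * (1 + e) + e * e.
  by rewrite /e; comm_ring.
by apply: ideal_genD => //; apply: ideal_genMr.
Qed.

Lemma ideal_gen1_mod_central_sqr0 : ideal_gen C 1 -> ideal_gen D 1.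
Proof.
move=> /ideal_gen_sum_normal_form [s [Cs D1]].
by apply: (ideal_gen1_of_sum_normal_form (r := 1) Cs); rewrite mulr1.
Qed.

End CentralSquareZero.

Section CommutatorIdeals.
Variable R : pzRingType.

Definition is_comm (g : R) := exists a b, g = commr_op a b.
Definition is_comm_x (g : R) := exists a b x, g = commr_op (commr_op a b) x.
Definition is_comm_comm (g : R) :=
  exists a b c d, g = commr_op (commr_op a b) (commr_op c d).

Lemma ideal_gen1_comm_x : ideal_gen is_comm 1 -> ideal_gen is_comm_x 1.
Proof.
apply: ideal_gen1_mod_central_sqr0 => [c x [a [b ->]] | _ [a [b ->]]].
- by apply: ideal_gen_gen; exists a, b, x.
- rewrite commr_op_sqr; apply: ideal_genB; last apply: ideal_genMl.
  + by apply: ideal_gen_gen; exists a, (a * b), b.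
  + by apply: ideal_gen_gen; exists a, b, b.
Qed.

Lemma ideal_gen_comm_x_mul g y h :
  is_comm_x g -> is_comm_x h -> ideal_gen is_comm_comm (g * y * h).
Proof.
move=> [a [b [x ->]]] [a' [b' [x' ->]]]; rewrite commr_x_mul_commr_x.
have gen p q r s : ideal_gen is_comm_comm (commr_op (commr_op p q) (commr_op r s)).
  by apply: ideal_gen_gen; exists p, q, r, s.
apply: ideal_genD; last by apply/ideal_genMl/gen.
apply: ideal_genD; last by apply/ideal_genMr/gen.
apply: ideal_genB; last exact: gen.
apply: ideal_genB; last by apply/ideal_genMr/ideal_genMl/gen.
apply: ideal_genB; last by apply/ideal_genMl/gen.
apply: ideal_genB; last by apply/ideal_genMr/ideal_genMl/gen.
by apply: ideal_genD; apply/ideal_genMl/gen.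
Qed.

Definition comm_prod_sum (n : nat) (t : R) :=
  exists b c d e : 'I_n -> R,
    t = \sum_(j < n) commr_op (b j) (c j) * commr_op (d j) (e j).

Lemma comm_prod_sum0 : comm_prod_sum 0 0.
Proof. by exists (fun=> 0), (fun=> 0), (fun=> 0), (fun=> 0); rewrite big_ord0. Qed.

Lemma comm_prod_sumD n m t s :
  comm_prod_sum n t -> comm_prod_sum m s -> comm_prod_sum (n + m) (t + s).
Proof.
move=> [b [c [d [e ->]]]] [b' [c' [d' [e' ->]]]].
pose cat (f : 'I_n -> R) (f' : 'I_m -> R) i :=
  match split i with inl j => f j | inr k => f' k end.
exists (cat b b'), (cat c c'), (cat d d'), (cat e e'); rewrite big_split_ord.
by congr (_ + _); apply: eq_bigr => i _;
   rewrite /cat ?(unsplitK (inl _ i)) ?(unsplitK (inr _ i)).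
Qed.

Lemma comm_prod_sumS n t p q r s :
  comm_prod_sum n t -> comm_prod_sum n.+1 (t + commr_op p q * commr_op r s).
Proof.
move=> St; rewrite -addn1; apply: comm_prod_sumD St _.
by exists (fun=> p), (fun=> q), (fun=> r), (fun=> s); rewrite big_ord1.
Qed.

Lemma comm_prod_sumN n t : comm_prod_sum n t -> comm_prod_sum n (- t).
Proof.
move=> [b [c [d [e ->]]]]; exists c, b, d, e; rewrite -sumrN.
by apply: eq_bigr => j _; rewrite (commr_opC (c j)) mulNr.
Qed.

Lemma comm_prod_sum_commr n t y :
  comm_prod_sum n t -> comm_prod_sum (n + n) (commr_op t y).
Proof.
move=> [b [c [d [e ->]]]].
rewrite commr_op_suml; under eq_bigr do rewrite commr_opMl.
rewrite big_split /=; apply: comm_prod_sumD.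
- by exists (fun j => commr_op (b j) (c j)), (fun=> y), d, e.
- by exists b, c, (fun j => commr_op (d j) (e j)), (fun=> y).
Qed.

Lemma comm_prod_sum_mul_comm_comm x g : is_comm_comm g -> comm_prod_sum 9 (x * g).
Proof.
move=> [a [b [c [d ->]]]]; rewrite mul_commr_comm.
do 8 apply: comm_prod_sumS.
by rewrite -[commr_op _ _ * _]add0r; apply/comm_prod_sumS/comm_prod_sum0.
Qed.

Lemma comm_prod_sum_mul_ideal g :
  ideal_gen is_comm_comm g -> exists n, forall t, comm_prod_sum n (t * g).
Proof.
elim=> [_ [x [g' [y [Gg' ->]]]] | | u v _ [n Su] _ [m Sv]].
- exists (9 + (9 + 9))%N => t; rewrite mul_sandwich_commr.
  apply: comm_prod_sumD; last apply: comm_prod_sum_commr;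
    exact: comm_prod_sum_mul_comm_comm.
- by exists 0%N => t; rewrite mulr0; apply: comm_prod_sum0.
- by exists (n + m)%N => t; rewrite mulrBr; apply: comm_prod_sumD (Su t) (comm_prod_sumN (Sv t)).
Qed.

Lemma comm_prod_sum_of_comm_ideal1 :
  comm_ideal (1 : R) -> exists N, forall a, comm_prod_sum N a.
Proof.
move=> /ideal_gen_span /ideal_gen1_comm_x D1.
have /comm_prod_sum_mul_ideal [N SN] : ideal_gen is_comm_comm 1.
  by rewrite -(mulr1 1); exact: (ideal_gen_mul ideal_gen_comm_x_mul D1 D1).
by exists N => a; rewrite -[a]mulr1.
Qed.

End CommutatorIdeals.

Section EasyImplications.
Variables (K : pzRingType) (A : lalgType K).

Lemma subalg_gen_comm_of_comm_prod_sum N (a : A) :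
  comm_prod_sum N a -> subalg_gen (@is_comm A) a.
Proof.
move=> [b [c [d [e ->]]]]; apply: big_ind => [||j _].
- exact: sag_0.
- exact: sag_add.
- by apply: sag_mul; apply: sag_gen; [exists (b j), (c j) | exists (d j), (e j)].
Qed.

Lemma comm_ideal_of_subalg_gen_comm (a : A) : subalg_gen (@is_comm A) a -> comm_ideal a.
Proof.
elim=> [z Cz | | u v _ Iu _ Iv | k u _ Iu | u v _ Iu _ Iv].
- by apply: (ideal_gen_gen (G := @comm_span A)); apply: asg_gen.
- exact: ideal_gen0.
- exact: ideal_genD.
- exact: ideal_genZ.
- exact: ideal_genMr.
Qed.

End EasyImplications.

Theorem theorem3p4 (K : comPzRingType) (A : algType K) :
  [<-> (forall a : A, comm_ideal a);
       (forall a : A, subalg_gen (fun z : A => exists x y : A, z = commr_op x y) a);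
       (exists N : nat, forall a : A, exists b c d e : 'I_N -> A,
          a = \sum_(j < N) commr_op (b j) (c j) * commr_op (d j) (e j))].
Proof.
tfae=> [I a | S | [N SN] a].
- have [N SN] := comm_prod_sum_of_comm_ideal1 (I 1).
  exact: subalg_gen_comm_of_comm_prod_sum (SN a).
- exact/comm_prod_sum_of_comm_ideal1/comm_ideal_of_subalg_gen_comm/S.
- exact/comm_ideal_of_subalg_gen_comm/subalg_gen_comm_of_comm_prod_sum/SN.
Qed.
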